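(* Let $B$ be a minimum-weight basis of the weighted uncertainty matroid $\mathcal{M}=(E,\mathcal{I},A,w)$. A set $Q\subseteq E$ is a certificate that verifies $B$ if and only if $U_e(Q)\le L_f(Q)$ for all $e\in B$ and all $f\in (E\setminus\mathrm{span}_M(B\setminus\{e\}))\setminus\{e\}$.
   Context: A weighted uncertainty matroid $\mathcal{M}=(E,\mathcal{I},A,w)$ consists of a matroid $M=(E,\mathcal{I})$ on a finite set $E$, for each $e\in E$ a non-empty finite union $A_e$ of bounded real intervals (each open or closed), and a weight $w_e\in A_e$. Let $L_e=\inf A_e$, $U_e=\sup A_e$. A minimum-weight basis is a basis of $M$ minimizing the sum of weights $w$. A weight assignment is $w^*:E\to\mathbb{R}$ with $w^*_e\in A_e$ for all $e$, consistent with $Q$ if $w^*_e=w_e$ for $e\in Q$. $Q$ verifies $B$ (is a certificate for $B$) if for every weight assignment $w^*$ consistent with $Q$, $B$ is a minimum-weight basis with respect to $w^*$. For $Q\subseteq E$: $L_e(Q)=w_e$ if $e\in Q$ and $L_e(Q)=L_e$ otherwise; $U_e(Q)=w_e$ if $e\in Q$ and $U_e(Q)=U_e$ otherwise. $\mathrm{span}_M(X)=\{e\in E: r(X\cup\{e\})=r(X)\}$ with $r$ the rank function of $M$. *)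

From mathcomp Require Import all_boot all_order all_algebra.
From mathcomp Require boolp classical_sets.
From mathcomp Require Import reals.
Set Implicit Arguments. Unset Strict Implicit. Unset Printing Implicit Defensive.
Import Order.TTheory GRing.Theory Num.Theory.
Local Open Scope ring_scope.

Section Matroid.
Variable E : finType.
Variable indep : {set E} -> bool.

Definition is_matroid : Prop :=
  [/\ indep set0,
      (forall X Y : {set E}, Y \subset X -> indep X -> indep Y) &
      (forall X Y : {set E}, indep X -> indep Y -> #|X| < #|Y| ->
          exists2 e, e \in Y :\: X & indep (e |: X))]%N.

Definition is_basis (B : {set E}) : bool := maxset indep B.

Definition rank (X : {set E}) : nat :=
  \max_(I : {set E} | (I \subset X) && indep I) #|I|.

Definition mspan (X : {set E}) : {set E} :=
  [set e | rank (e |: X) == rank X].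
End Matroid.

(* An interval is encoded as (closed?, left endpoint, right endpoint):
   (true, a, b) is [a,b], (false, a, b) is (a,b). An uncertainty area is a
   finite list of such bounded intervals, denoting their union. *)
Definition in_interval {R : realType} (I : bool * R * R) (x : R) : bool :=
  let: (c, a, b) := I in if c then (a <= x <= b) else (a < x < b).

Definition area {R : realType} (s : seq (bool * R * R)) : classical_sets.set R :=
  fun x => has (fun I => in_interval I x) s.

Definition valid_area {R : realType} (s : seq (bool * R * R)) : Prop :=
  exists x, area s x.

Definition Lo {R : realType} (s : seq (bool * R * R)) : R := inf (area s).
Definition Up {R : realType} (s : seq (bool * R * R)) : R := sup (area s).

Section Weighted.
Variables (R : realType) (E : finType) (indep : {set E} -> bool).
Variable A : E -> seq (bool * R * R).
Variable w : E -> R.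

Definition min_weight_basis (ws : E -> R) (B : {set E}) : Prop :=
  is_basis indep B /\
  forall B' : {set E}, is_basis indep B' ->
    \sum_(e in B) ws e <= \sum_(e in B') ws e.

Definition consistent (Q : {set E}) (ws : E -> R) : Prop :=
  (forall e, area (A e) (ws e)) /\ (forall e, e \in Q -> ws e = w e).

Definition verifies (Q B : {set E}) : Prop :=
  forall ws : E -> R, consistent Q ws -> min_weight_basis ws B.

Definition LQ (Q : {set E}) (e : E) : R := if e \in Q then w e else Lo (A e).
Definition UQ (Q : {set E}) (e : E) : R := if e \in Q then w e else Up (A e).
End Weighted.

From mathcomp Require Import all_boot all_order all_algebra.
From mathcomp Require Import reals.
From mathcomp Require classical_sets.
From mathcomp Require Import zify lra.
Set Implicit Arguments. Unset Strict Implicit. Unset Printing Implicit Defensive.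
Import Order.TTheory GRing.Theory Num.Theory.
Local Open Scope ring_scope.

(* Call (e, f) an exchange pair of B when e is in B and f lies outside
   span(B - e), so that B - e + f is again a basis.  If U_e(Q) > L_f(Q) for an
   exchange pair, some weighting consistent with Q puts w_e above w_f, and then
   B - e + f is strictly lighter than B.  Conversely, if U_e(Q) <= L_f(Q) on all
   exchange pairs, every consistent weighting has w_e <= w_f on them, and such a
   basis is optimal: for each threshold t, B has at least as many elements of
   weight < t as any basis B' (otherwise augmenting the light part of B from
   the light part of B' produces an exchange pair with w_f < t <= w_e), and two
   equicardinal sets compared this way at every threshold have ordered sums. *)

Section Sublevel.
Variables (R : realDomainType) (T : finType) (ws : T -> R).

Definition sublevel (Z : {set T}) (t : R) : {set T} := [set z in Z | ws z < t].

Lemma sublevel_sub (Z : {set T}) t : sublevel Z t \subset Z.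
Proof. by apply/subsetP => z; rewrite inE => /andP[]. Qed.

Lemma sublevelS (Y Z : {set T}) t : Y \subset Z -> sublevel Y t \subset sublevel Z t.
Proof. by move=> /subsetP YZ; apply/subsetP => z; rewrite !inE => /andP[/YZ -> ->]. Qed.

Lemma sublevel_id (Z : {set T}) t : (forall z, z \in Z -> ws z < t) -> sublevel Z t = Z.
Proof. by move=> Zt; apply/setP => z; rewrite inE; case: (boolP (z \in Z)) => // /Zt. Qed.

Lemma sublevelD1 (Z : {set T}) z t : ~~ (ws z < t) -> sublevel (Z :\ z) t = sublevel Z t.
Proof.
move=> zt; apply/setP => u; rewrite !inE.
by case: eqVneq => [->|]; rewrite ?(negbTE zt) ?andbF.
Qed.

Lemma exists_max_in (Z : {set T}) z0 : z0 \in Z ->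
  exists2 z, z \in Z & forall y, y \in Z -> ws y <= ws z.
Proof. by case/(Order.TotalTheory.arg_maxP ws) => z; exists z. Qed.

Lemma sum_le_card_sublevel (X Y : {set T}) : #|X| = #|Y| ->
  (forall t, #|sublevel Y t| <= #|sublevel X t|)%N ->
  \sum_(x in X) ws x <= \sum_(y in Y) ws y.
Proof.
move Hn: #|X| => n; elim: n X Y Hn => [|n IH] X Y cX cY XY.
  move/eqP: cX; move/eqP: cY; rewrite eq_sym !cards_eq0 => /eqP-> /eqP->.
  by rewrite !big_set0.
have [x0 Xx0] : {x0 | x0 \in X} by apply/sigW/set0Pn; rewrite -card_gt0 cX.
have [y0 Yy0] : {y0 | y0 \in Y} by apply/sigW/set0Pn; rewrite -card_gt0 -cY.
have [xm Xxm xm_max] := exists_max_in Xx0.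
have [ym Yym ym_max] := exists_max_in Yy0.
have cXm : #|X :\ xm| = n by move: cX; rewrite (cardsD1 xm) Xxm => -[].
have cYm : #|Y :\ ym| = n by move: cY; rewrite (cardsD1 ym) Yym => -[].
(* Drop a heaviest element from each side; the threshold ws xm orders them. *)
have le_max : ws xm <= ws ym.
  rewrite leNgt; apply/negP => ltyx.
  have := XY (ws xm); rewrite sublevel_id => [|y /ym_max yxm]; last exact: le_lt_trans yxm ltyx.
  rewrite -(sublevelD1 X (negbT (ltxx (ws xm)))) // -cY.
  by have := subset_leq_card (sublevel_sub (X :\ xm) (ws xm)); rewrite cXm; lia.
rewrite (big_setD1 _ Xxm) (big_setD1 _ Yym) lerD // (IH _ _ cXm) ?cXm // => t.
have [xmt | xmt] := boolP (ws xm < t).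
- rewrite (sublevel_id (Z := X :\ xm)) => [|x /setD1P[_ /xm_max xxm]].
    by rewrite cXm -cYm subset_leq_card ?sublevel_sub.
  exact: le_lt_trans xxm xmt.
- rewrite (sublevelD1 X xmt); apply: leq_trans (XY t).
  exact/subset_leq_card/sublevelS/subsetDl.
Qed.

End Sublevel.

Section Matroid.
Variables (E : finType) (indep : {set E} -> bool).

Lemma rank_le_card (X : {set E}) : (rank indep X <= #|X|)%N.
Proof. by apply/bigmax_leqP => I /andP[/subset_leq_card]. Qed.

Lemma card_le_rank (I X : {set E}) : I \subset X -> indep I -> (#|I| <= rank indep X)%N.
Proof. by move=> IX iI; apply: (leq_bigmax_cond (F := fun I : {set E} => #|I|)); rewrite IX iI. Qed.

Lemma rank_indep (X : {set E}) : indep X -> rank indep X = #|X|.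
Proof. by move=> iX; apply/eqP; rewrite eqn_leq rank_le_card card_le_rank. Qed.

Lemma mem_mspan (X : {set E}) f : f \in X -> f \in mspan indep X.
Proof. by move=> Xf; rewrite inE (setUidPr _) ?sub1set. Qed.

Lemma notin_mspan (X : {set E}) f : indep X ->
  (f \notin mspan indep X) = (f \notin X) && indep (f |: X).
Proof.
move=> iX; have [Xf | Xf] /= := boolP (f \in X); first by rewrite mem_mspan.
rewrite inE (rank_indep iX); have [ifX | nifX] /= := boolP (indep (f |: X)).
  by rewrite (rank_indep ifX) cardsU1 Xf neq_ltn ltnSn orbT.
apply/negPn/eqP/anti_leq/andP; split; last exact: card_le_rank (subsetUr _ _) iX.
apply/bigmax_leqP => I /andP[IfX iI].
have: I \proper f |: X by rewrite properEneq IfX andbT; apply: contraNneq nifX => <-.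
by move/proper_card; rewrite cardsU1 Xf add1n ltnS.
Qed.

Hypothesis hM : is_matroid indep.

Lemma basis_indep (B : {set E}) : is_basis indep B -> indep B.
Proof. by case/maxsetP. Qed.

Lemma indepS (X Y : {set E}) : Y \subset X -> indep X -> indep Y.
Proof. by case: hM => _ hsub _; apply: hsub. Qed.

Lemma indep_card_le_basis (B K : {set E}) : is_basis indep B -> indep K -> (#|K| <= #|B|)%N.
Proof.
case: hM => _ _ haug /maxsetP[iB maxB] iK; rewrite leqNgt; apply/negP => ltBK.
have [e /setDP[Ke Be] ieB] := haug B K iB iK ltBK.
by move: Be; rewrite -(maxB _ ieB (subsetUr _ _)) setU11.
Qed.

Lemma card_basis (B B' : {set E}) : is_basis indep B -> is_basis indep B' -> #|B| = #|B'|.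
Proof.
by move=> bB bB'; apply/anti_leq; rewrite !indep_card_le_basis ?basis_indep.
Qed.

Lemma basis_of_card (B J : {set E}) :
  is_basis indep B -> indep J -> #|J| = #|B| -> is_basis indep J.
Proof.
move=> bB iJ cJ; apply/maxsetP; split=> // K iK JK.
by apply/eqP; rewrite eq_sym eqEcard JK cJ indep_card_le_basis.
Qed.

Lemma indep_augment (I B : {set E}) : indep I -> indep B -> (#|I| <= #|B|)%N ->
  exists J, [/\ indep J, I \subset J, J \subset I :|: B & #|J| = #|B|].
Proof.
case: hM => _ _ haug; move=> + iB; move Hn: (#|B| - #|I|)%N => n.
elim: n I Hn => [|n IH] I Hn iI leIB.
  by exists I; split=> //; [exact: subsetUl | apply/anti_leq; rewrite leIB; lia].
have ltIB : (#|I| < #|B|)%N by lia.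
have [x /setDP[xB xI] ixI] := haug I B iI iB ltIB.
have cxI : #|x |: I| = #|I|.+1 by rewrite cardsU1 xI.
have [J [iJ xIJ JxIB cJ]] := IH (x |: I) ltac:(lia) ixI ltac:(lia).
exists J; split=> //; first exact: subset_trans (subsetUr _ _) xIJ.
have xB1 : [set x] \subset B by rewrite sub1set.
by rewrite setUAC (setUidPr xB1) setUC in JxIB.
Qed.

Lemma basis_exchange (B : {set E}) e f : is_basis indep B -> e \in B ->
  f \notin mspan indep (B :\ e) -> is_basis indep (f |: (B :\ e)).
Proof.
move=> bB Be; rewrite notin_mspan; last exact: indepS (subsetDl _ _) (basis_indep bB).
case/andP=> fBe ifBe; apply: basis_of_card bB ifBe _.
by rewrite cardsU1 fBe (cardsD1 e B) Be.
Qed.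

Lemma fundamental_exchange (B X : {set E}) f : is_basis indep B -> X \subset B ->
  f \notin B -> indep (f |: X) ->
  exists2 e, e \in B :\: X & f \notin mspan indep (B :\ e).
Proof.
move=> bB XB fB ifX; have iB := basis_indep bB.
(* Extend f + X to a basis J inside f + B: J misses exactly one e of B. *)
have [J [iJ fXJ JfXB cJ]] := indep_augment ifX iB (indep_card_le_basis bB ifX).
rewrite -setUA (setUidPr XB) in JfXB.
have /subsetPn[e fBe eJ] : ~~ (f |: B \subset J).
  by apply/negP => /subset_leq_card; rewrite cJ cardsU1 fB add1n ltnn.
have Jf : f \in J by rewrite (subsetP fXJ) ?setU11.
have Be : e \in B by move: fBe; rewrite in_setU1; case: eqVneq eJ => // -> /negP.
have Xe : e \notin X by apply: contra eJ => /(subsetP (subset_trans (subsetUr _ _) fXJ)).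
exists e; first by rewrite inE Xe.
have fBe' : f \notin B :\ e by rewrite in_setD1 (negbTE fB) andbF.
have JfBe : J = f |: (B :\ e).
  apply/eqP; rewrite eqEcard cardsU1 fBe' cJ (cardsD1 e B) Be leqnn andbT.
  apply/subsetP => y Jy; rewrite in_setU1 in_setD1.
  have ye : y != e by apply: contraNneq eJ => <-.
  by rewrite ye; move/(subsetP JfXB): Jy; rewrite in_setU1.
rewrite notin_mspan; last exact: indepS (subsetDl _ _) iB.
by rewrite fBe' -JfBe.
Qed.

Lemma min_weight_basis_exchange (R : realType) (ws : E -> R) (B : {set E}) :
  is_basis indep B ->
  (forall e f, e \in B -> f \in (~: mspan indep (B :\ e)) :\ e -> ws e <= ws f) ->
  min_weight_basis indep ws B.
Proof.
case: hM => _ _ haug bB exch; split=> // B' bB'.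
apply: sum_le_card_sublevel; first exact: card_basis.
move=> t; rewrite leqNgt; apply/negP => ltB'B.
have sub_indep Z : is_basis indep Z -> indep (sublevel ws Z t).
  by move=> bZ; apply: indepS (sublevel_sub _ _ _) (basis_indep bZ).
have [f /setDP[fB't fBt] ifBt] := haug _ _ (sub_indep _ bB) (sub_indep _ bB') ltB'B.
have ft : ws f < t by move: fB't; rewrite inE => /andP[].
have fB : f \notin B by move: fBt; rewrite inE ft andbT.
have [e /setDP[Be eBt] fsp] := fundamental_exchange bB (sublevel_sub _ _ _) fB ifBt.
have te : t <= ws e by move: eBt; rewrite inE Be -leNgt.
have fe : f != e by apply: contraNneq fB => ->.
have := exch e f Be; rewrite in_setD1 in_setC fe fsp => /(_ isT) ef.
by have := le_lt_trans ef ft; rewrite ltNge te.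
Qed.

End Matroid.

Section UncertaintyAreas.
Variable R : realType.

Lemma in_interval_norm_le (I : bool * R * R) x :
  in_interval I x -> `|x| <= `|I.1.2| + `|I.2|.
Proof.
case: I => [[c a] b] /= xI; rewrite ler_norml.
have := ler_norm a; have := ler_norm (- a); have := ler_norm b; have := ler_norm (- b).
by rewrite !normrN; case: c xI => /andP[]; lra.
Qed.

Lemma area_bounded (s : seq (bool * R * R)) : exists M, forall x, area s x -> `|x| <= M.
Proof.
exists (\sum_(I <- s) (`|I.1.2| + `|I.2|)) => x; rewrite /area.
elim: s => [|I s IH] //=; rewrite big_cons => /orP[/in_interval_norm_le xI | /IH xs].
  by apply: le_trans xI _; rewrite lerDl sumr_ge0 // => J _; rewrite addr_ge0.
by apply: le_trans xs _; rewrite lerDr addr_ge0.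
Qed.

Lemma has_sup_area (s : seq (bool * R * R)) : valid_area s -> classical_sets.has_sup (area s).
Proof.
case=> x sx; split; first by exists x.
have [M sM] := area_bounded s; by exists M => y /sM; rewrite ler_norml => /andP[].
Qed.

Lemma has_inf_area (s : seq (bool * R * R)) : valid_area s -> classical_sets.has_inf (area s).
Proof.
case=> x sx; split; first by exists x.
have [M sM] := area_bounded s; by exists (- M) => y /sM; rewrite ler_norml => /andP[].
Qed.

End UncertaintyAreas.

Section Certificates.
Variables (R : realType) (E : finType) (indep : {set E} -> bool).
Variables (A : E -> seq (bool * R * R)) (w : E -> R).
Hypotheses (hA : forall e, valid_area (A e)) (hw : forall e, area (A e) (w e)).

Lemma consistent_le_UQ Q ws e : consistent A w Q ws -> ws e <= UQ A w Q e.
Proof.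
case=> Aws Qws; rewrite /UQ; case: ifP => [/Qws -> // | _].
exact: sup_upper_bound (has_sup_area (hA e)) _ (Aws e).
Qed.

Lemma consistent_ge_LQ Q ws e : consistent A w Q ws -> LQ A w Q e <= ws e.
Proof.
case=> Aws Qws; rewrite /LQ; case: ifP => [/Qws -> // | _].
exact: ge_inf (proj2 (has_inf_area (hA e))) _ (Aws e).
Qed.

Lemma UQ_adherent Q e c : c < UQ A w Q e ->
  exists x, [/\ area (A e) x, e \in Q -> x = w e & c < x].
Proof.
rewrite /UQ; case: ifP => [Qe cw | _ cU]; first by exists (w e).
have Uc : 0 < Up (A e) - c by rewrite subr_gt0.
have [x Ax cx] := sup_adherent Uc (has_sup_area (hA e)).
by exists x; split=> //; move: cx; rewrite /Up; lra.
Qed.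

Lemma LQ_adherent Q e c : LQ A w Q e < c ->
  exists x, [/\ area (A e) x, e \in Q -> x = w e & x < c].
Proof.
rewrite /LQ; case: ifP => [Qe wc | _ Lc]; first by exists (w e).
have cL : 0 < c - Lo (A e) by rewrite subr_gt0.
have [x Ax xc] := inf_adherent cL (has_inf_area (hA e)).
by exists x; split=> //; move: xc; rewrite /Lo; lra.
Qed.

Hypothesis hM : is_matroid indep.

Lemma verifies_UQ_le_LQ Q B : is_basis indep B -> verifies indep A w Q B ->
  forall e f, e \in B -> f \in (~: mspan indep (B :\ e)) :\ e -> UQ A w Q e <= LQ A w Q f.
Proof.
move=> bB verB e f Be; rewrite in_setD1 in_setC => /andP[fe fsp].
rewrite leNgt; apply/negP => LU; pose c := (LQ A w Q f + UQ A w Q e) / 2.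
have [xe [Axe Qxe cxe]] : exists x, [/\ area (A e) x, e \in Q -> x = w e & c < x].
  by apply: UQ_adherent; rewrite /c; lra.
have [xf [Axf Qxf xfc]] : exists x, [/\ area (A f) x, f \in Q -> x = w f & x < c].
  by apply: LQ_adherent; rewrite /c; lra.
pose ws g := if g == e then xe else if g == f then xf else w g.
have cws : consistent A w Q ws.
  by split=> g; rewrite /ws; case: eqVneq => [-> | _] //; case: eqVneq => [-> | _].
have fBe : f \notin B :\ e by apply: contra fsp; apply: mem_mspan.
have := (verB ws cws).2 _ (basis_exchange hM bB Be fsp).
rewrite (big_setD1 _ Be) (big_setU1 _ fBe) /= /ws eqxx (negbTE fe) eqxx.
lra.
Qed.

Lemma UQ_le_LQ_verifies Q B : is_basis indep B ->
  (forall e f, e \in B -> f \in (~: mspan indep (B :\ e)) :\ e ->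
     UQ A w Q e <= LQ A w Q f) ->
  verifies indep A w Q B.
Proof.
move=> bB UL ws cws; apply: (min_weight_basis_exchange hM bB) => e f Be Bf.
exact: le_trans (consistent_le_UQ e cws) (le_trans (UL e f Be Bf) (consistent_ge_LQ f cws)).
Qed.

End Certificates.

Theorem lemma8 (R : realType) (E : finType) (indep : {set E} -> bool)
  (hM : is_matroid indep)
  (A : E -> seq (bool * R * R)) (hA : forall e, valid_area (A e))
  (w : E -> R) (hw : forall e, area (A e) (w e))
  (B : {set E}) (hB : min_weight_basis indep w B) (Q : {set E}) :
  verifies indep A w Q B <->
  (forall e f, e \in B ->
     f \in (~: mspan indep (B :\ e)) :\ e ->
     UQ A w Q e <= LQ A w Q f).
Proof.
have bB := hB.1.
split; [exact: verifies_UQ_le_LQ | exact: UQ_le_LQ_verifies].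
Qed.
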